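(* Let $d\in\mathbb{N}$, $\alpha\in[0,1)$, $\delta>0$, $\lambda>0$, $\eta\in\mathbb{R}^{d}$, and let $\rho\in\mathbb{R}^{d\times d}$ be a symmetric positive definite matrix. For $x,y\in\mathbb{R}^d$ put $\langle x,y\rangle_\rho=x^{\top}\rho^{-1}y$ and $\|x\|_\rho=\sqrt{\langle x,x\rangle_\rho}$, and set $c_1=\sqrt{\|\eta\|_\rho^{2}+2\lambda}$. Consider the (Normal Tempered Stable) L\'evy density on $\mathbb{R}^d_*=\mathbb{R}^d\setminus\{0\}$ \[ \ell(z)=2\delta\sqrt{\frac{c_1^{\,2\alpha+d}}{(2\pi)^{d}\det[\rho]}}\;\frac{K_{\alpha+\frac{d}{2}}\!\left(c_1\|z\|_\rho\right)}{\|z\|_\rho^{\alpha+\frac{d}{2}}}\;e^{\langle\eta,z\rangle_\rho},\qquad z\in\mathbb{R}^d_*, \] where $K_\nu(\tau)=\frac12\int_0^\infty y^{\nu-1}e^{-\frac12\tau(y+y^{-1})}\,dy$ ($\tau>0$) is the modified Bessel function of the second kind. Define \[ A_\ell=2\alpha,\qquad B_\ell=\sqrt{\|\eta\|_\rho^{2}+2\lambda}-\|\eta\|_\rho,\qquad C_\ell(h)=\frac{2^{\alpha}\delta\,\Gamma\!\left(\alpha+\frac d2\right)}{\sqrt{\pi^{d}\det[\rho]}}\,e^{h\|\eta\|_\rho}\quad(h>0). \] Then for every $h>0$ and every $z\in\mathbb{R}^d_*$ with $\|z\|_\rho\in(0,h]$ one has $\ell(z)\le C_\ell(h)\,\|z\|_\rho^{-A_\ell-d}$,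 and $\ell(z)=O\!\left(e^{-B_\ell\|z\|_\rho}\right)$ as $\|z\|_\rho\to\infty$.
   Context: The density $\ell$ is the L\'evy measure of the $d$-dimensional Normal Tempered Stable process $L(t)=B(G(t))-\mathbb{E}[B(G(t))]$, where $B(t)=\eta t+\sqrt{\rho}\,W(t)$ with $W$ a standard $d$-dimensional Wiener process and $G$ an independent tempered stable subordinator with L\'evy density $\mathbb{I}_{x>0}\,\delta e^{-\lambda x}x^{-1-\alpha}$. $\Gamma$ denotes the Gamma function. *)

From HB Require Import structures.
From mathcomp Require Import all_boot all_order all_algebra.
From mathcomp Require Import all_classical all_reals all_analysis.
Set Implicit Arguments. Unset Strict Implicit. Unset Printing Implicit Defensive.
Import Order.TTheory GRing.Theory Num.Theory.
Import numFieldNormedType.Exports.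
Local Open Scope classical_set_scope.
Local Open Scope ring_scope.

Section NTS.
Variable R : realType.

Definition int_pos (f : R -> R) : R :=
  fine (\int[@lebesgue_measure R]_(y in [set y : R | (0 < y)%R]) (f y)%:E)%E.

Definition Gammaf (s : R) : R :=
  int_pos (fun t => powR t (s - 1) * expR (- t)).

Definition besselK (nu tau : R) : R :=
  2^-1 * int_pos (fun y => powR y (nu - 1) * expR (- (tau * (y + y^-1)) / 2)).

Definition ip_rho (d : nat) (rho : 'M[R]_d) (x y : 'cV[R]_d) : R :=
  (x^T *m invmx rho *m y) 0 0.
Definition norm_rho (d : nat) (rho : 'M[R]_d) (x : 'cV[R]_d) : R :=
  Num.sqrt (ip_rho rho x x).

Definition sym_posdef (d : nat) (rho : 'M[R]_d) : Prop :=
  rho^T = rho /\ forall x : 'cV[R]_d, x != 0 -> 0 < (x^T *m rho *m x) 0 0.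

Definition c1_NTS (d : nat) (rho : 'M[R]_d) (eta : 'cV[R]_d) (lambda : R) : R :=
  Num.sqrt (norm_rho rho eta ^+ 2 + 2 * lambda).

Definition ell_NTS (d : nat) (alpha delta lambda : R) (eta : 'cV[R]_d)
  (rho : 'M[R]_d) (z : 'cV[R]_d) : R :=
  let c1 := c1_NTS rho eta lambda in
  let nu := alpha + d%:R / 2 in
  2 * delta * Num.sqrt (powR c1 (2 * alpha + d%:R) /
                        ((2 * pi) ^+ d * \det rho))
    * (besselK nu (c1 * norm_rho rho z) / powR (norm_rho rho z) nu)
    * expR (ip_rho rho eta z).

Definition A_NTS (alpha : R) : R := 2 * alpha.
Definition B_NTS (d : nat) (rho : 'M[R]_d) (eta : 'cV[R]_d) (lambda : R) : R :=
  Num.sqrt (norm_rho rho eta ^+ 2 + 2 * lambda) - norm_rho rho eta.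
Definition C_NTS (d : nat) (alpha delta : R) (eta : 'cV[R]_d) (rho : 'M[R]_d)
  (h : R) : R :=
  powR 2 alpha * delta * Gammaf (alpha + d%:R / 2)
    / Num.sqrt (pi ^+ d * \det rho) * expR (h * norm_rho rho eta).

End NTS.

(* Both bounds come from the integral representation of K_nu and from
   int_0^oo y^(nu-1) e^(-c y) dy = c^(-nu) Gamma(nu).  Dropping the term tau/y in the
   exponent gives K_nu(tau) <= (tau/2)^(-nu) Gamma(nu) / 2; together with the
   Cauchy-Schwarz bound <eta, z>_rho <= ||eta||_rho ||z||_rho <= h ||eta||_rho this is
   exactly C_l(h) ||z||_rho^(-2 alpha - d).  For tau >= 1, using
   tau (y + 1/y) / 2 >= (tau - 1) + y / 2 instead gives
   K_nu(tau) <= e^(1 - tau) 2^nu Gamma(nu) / 2, so that l(z) is at most a constant times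
   e^(-c1 ||z||_rho + ||eta||_rho ||z||_rho) = e^(-B_l ||z||_rho). *)

From HB Require Import structures.
From mathcomp Require Import all_boot all_order all_algebra.
From mathcomp Require Import all_classical all_reals all_analysis.
From mathcomp Require Import measurable_realfun.
From mathcomp Require Import ring lra.
Import Order.TTheory GRing.Theory Num.Theory.
Import numFieldNormedType.Exports.
Local Open Scope ring_scope.
Set Implicit Arguments. Unset Strict Implicit.

Lemma powRVN (R : realType) (a x : R) : 0 <= a -> powR (a^-1) (- x) = powR a x.
Proof. by move=> a0; rewrite -powR_inv1 // -powRrM mulNr mul1r opprK. Qed.

(* Both sides vanish when [x <= 0]; this spares proving [0 < \det rho]. *)
Lemma sqrtrV_any (R : rcfType) (x : R) : Num.sqrt (x^-1) = (Num.sqrt x)^-1.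
Proof.
have [x0|x0] := leP 0 x; first exact: sqrtrV.
by rewrite !ler0_sqrtr ?invr0 ?invr_le0 ?ltW.
Qed.

Lemma cV_neq0_dim_gt0 (R : nmodType) (d : nat) (z : 'cV[R]_d) : z != 0 -> (0 < d)%N.
Proof. by case: d z => // z; rewrite flatmx0 eqxx. Qed.

Section gamma_integral.
Local Open Scope classical_set_scope.
Variable R : realType.
Local Notation mu := (@lebesgue_measure R).
Local Notation pos := [set y : R | 0 < y].

Lemma measurable_pos : measurable pos.
Proof.
have -> : pos = `]0, +oo[%classic by apply/seteqP; split => x /=; rewrite in_itv/= andbT.
exact: measurable_itv.
Qed.

Lemma continuous_powR_gt0 (p x : R) : 0 < x -> {for x, continuous (fun y : R => powR y p)}.
Proof.
move=> x0; apply: differentiable_continuous; apply/derivable1_diffP.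
by apply: derivable_powR; rewrite in_itv/= andbT.
Qed.

Lemma integral_powR_itvcc (nu a b : R) : 0 < nu -> 0 < a -> a < b ->
  (\int[mu]_(x in `[a, b]) (powR x (nu - 1))%:E =
    (powR b nu / nu)%:E - (powR a nu / nu)%:E)%E.
Proof.
move=> nu0 a0 ab.
have der x : 0 < x -> derivable (fun y => powR y nu / nu) x 1.
  move=> x0; apply: derivableM; last exact: derivable_cst.
  by apply: derivable_powR; rewrite in_itv/= andbT.
have cont x : 0 < x -> {for x, continuous (fun y => powR y nu / nu)}.
  by move=> x0; apply: differentiable_continuous; apply/derivable1_diffP; exact: der.
apply: (@continuous_FTC2 _ _ (fun y => powR y nu / nu)) => //.
- apply: continuous_in_subspaceT => x; rewrite inE /= in_itv /= => /andP[ax _].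
  exact: continuous_powR_gt0 (lt_le_trans a0 ax).
- split.
  + by move=> x; rewrite in_itv /= => /andP[ax _]; exact: der (lt_trans a0 ax).
  + by apply: cvg_at_right_filter; exact: cont.
  + by apply: cvg_at_left_filter; exact: cont (lt_trans a0 ab).
- move=> x; rewrite in_itv /= => /andP[ax _].
  have x0 := lt_trans a0 ax.
  rewrite derive1Mr; last by apply: derivable_powR; rewrite in_itv/= andbT.
  by rewrite powR_derive1 ?in_itv /= ?andbT // mulrC mulrA mulVf ?gt_eqF // mul1r.
Qed.

Lemma integral_powR_itvoc01_le (nu : R) : 0 < nu ->
  (\int[mu]_(x in `]0%R, 1%R]) (powR x (nu - 1))%:E <= (nu^-1)%:E)%E.
Proof.
move=> nu0.
pose F n := `[(n.+2%:R : R)^-1, 1]%classic.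
have inv_gt0 n : 0 < (n.+2%:R : R)^-1 by rewrite invr_gt0 ltr0n.
have inv_le n m : (n <= m)%N -> (m.+2%:R : R)^-1 <= n.+2%:R^-1.
  by move=> nm; rewrite lef_pV2 ?posrE ?ltr0n // ler_nat ltnS ltnS.
have FE : `]0, 1]%classic = \bigcup_n F n.
  apply/seteqP; split => x /=.
    rewrite in_itv /= => /andP[x0 x1].
    have [k] := ltr_add_invr x0; rewrite add0r => kx.
    exists k => //; rewrite /F /= in_itv /= x1 andbT.
    by apply: le_trans (ltW kx); rewrite lef_pV2 ?posrE ?ltr0n // ler_nat.
  move=> [n _]; rewrite /F /= !in_itv /= => /andP[nx ->]; rewrite andbT.
  exact: lt_le_trans nx.
have ndF : nondecreasing_seq F.
  move=> n m nm; rewrite subsetEset => x; rewrite /F /= !in_itv /=.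
  by move=> /andP[nx ->]; rewrite andbT (le_trans (inv_le _ _ nm)).
have mf i : measurable_fun (F i) (fun x => (powR x (nu - 1))%:E).
  by apply/measurable_EFinP; apply: measurable_funTS; exact: measurable_powR.
have f0 i x : F i x -> (0 <= (powR x (nu - 1))%:E)%E by rewrite lee_fin powR_ge0.
have := ge0_nondecreasing_set_cvg_integral (mu:=mu) ndF (fun i => measurable_itv _) mf f0.
rewrite -FE => /cvg_lim => <- //.
apply: lime_le.
  apply: ereal_nondecreasing_is_cvgn => n m nm.
  apply: ge0_subset_integral => //; [exact: measurable_itv|exact: measurable_itv| | |].
  - by apply/measurable_EFinP; apply: measurable_funTS; exact: measurable_powR.
  - by move=> x _; rewrite lee_fin powR_ge0.
  - by have := ndF _ _ nm; rewrite subsetEset.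
apply: nearW => n.
rewrite /F integral_powR_itvcc //; last by rewrite invf_lt1 ?ltr0n // ltr1n.
by rewrite powR1 mul1r -EFinB lee_fin gerBl divr_ge0 ?powR_ge0 ?ltW.
Qed.

Definition gamma_integrand (s t : R) : R := powR t (s - 1) * expR (- t).

Lemma measurable_gamma_integrand (s : R) : measurable_fun setT (gamma_integrand s).
Proof.
apply: measurable_funM; first exact: measurable_powR.
by apply: measurableT_comp; [exact: measurable_expR|exact: measurable_funN].
Qed.

Lemma gamma_integrand_ge0 (s t : R) : 0 <= gamma_integrand s t.
Proof. by rewrite mulr_ge0 ?powR_ge0 ?expR_ge0. Qed.

(* [t^(s-1) <= e^(q ln t)] with [q = |s-1|+1], and [q ln t <= t/4 + q ln (4q)] by
   [ln u < u] at [u = t/(4q)]; what remains of [e^(-t)] is [e^(-t/2) e^(-t/4)]. *)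
Lemma gamma_integrand_le_exponential_pdf (s t : R) : 1 <= t ->
  gamma_integrand s t <=
    2 * expR ((`|s - 1| + 1) * ln (4 * (`|s - 1| + 1))) * exponential_pdf (2^-1) t.
Proof.
move=> t1; set q := `|s - 1| + 1.
have t0 : 0 < t by apply: lt_le_trans t1.
have q0 : 0 < q by rewrite /q ltr_pwDr.
rewrite exponential_pdfE ?(ltW t0) //= /gamma_integrand.
have pow_le : powR t (s - 1) <= expR (q * ln t).
  rewrite [X in _ <= X](_ : _ = powR t q); last by rewrite /powR gt_eqF.
  by apply: ler_powR => //; rewrite /q (le_trans (ler_norm _)) // lerDl.
have ln_le : q * ln t <= t / 4 + q * ln (4 * q).
  have -> : ln t = ln (t / (4 * q)) + ln (4 * q).
    by rewrite -lnM ?posrE ?divr_gt0 ?mulr_gt0 // divfK // mulf_neq0 // ?gt_eqF.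
  rewrite mulrDr lerD2r.
  have /ltW := ln_sublinear (divr_gt0 t0 (mulr_gt0 (ltr0n _ 4) q0)).
  rewrite -(ler_pM2l q0) => /le_trans; apply.
  by rewrite le_eqVlt; apply/orP; left; apply/eqP; field; exact: lt0r_neq0.
apply: le_trans (ler_wpM2r (expR_ge0 _) pow_le) _.
rewrite -expRD.
rewrite [leRHS](_ : _ = expR (q * ln (4 * q)) * expR (- 2^-1 * t)); last by field.
rewrite -expRD ler_expR.
have : 0 <= t / 4 by rewrite divr_ge0 // ltW.
have : t = t / 2 + t / 4 + t / 4 by field.
have -> : - 2^-1 * t = - (t / 2) by rewrite mulNr mulrC.
move: ln_le; set L := q * ln t; set K := q * ln (4 * q).
by move: (t / 2) (t / 4) => a b; lra.
Qed.

Lemma integral_gamma_integrand_itvoy_lty (s : R) :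
  (\int[mu]_(x in `]1%R, +oo[) (gamma_integrand s x)%:E < +oo)%E.
Proof.
set C := 2 * expR ((`|s - 1| + 1) * ln (4 * (`|s - 1| + 1))).
have C0 : 0 <= C by rewrite mulr_ge0 ?expR_ge0.
have mC : measurable_fun setT (fun x => C * exponential_pdf (2^-1) x).
  by apply: measurable_funM => //; exact: measurable_exponential_pdf.
apply: (@le_lt_trans _ _ (\int[mu]_(x in `]1%R, +oo[) (C * exponential_pdf (2^-1) x)%:E)%E).
  apply: ge0_le_integral => //.
  - by move=> x _; rewrite lee_fin gamma_integrand_ge0.
  - by apply/measurable_EFinP; apply: measurable_funTS; exact: measurable_gamma_integrand.
  - by apply/measurable_EFinP; exact: measurable_funTS.
  - move=> x; rewrite /= in_itv /= andbT => x1; rewrite lee_fin.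
    exact: gamma_integrand_le_exponential_pdf (ltW x1).
apply: (@le_lt_trans _ _ (\int[mu]_(x in setT) (C * exponential_pdf (2^-1) x)%:E)%E).
  apply: ge0_subset_integral => //; first exact/measurable_EFinP.
  by move=> x _; rewrite lee_fin mulr_ge0 // exponential_pdf_ge0.
under eq_integral do rewrite EFinM.
rewrite ge0_integralZl_EFin //; last 2 first.
- by move=> x _; rewrite lee_fin exponential_pdf_ge0.
- by apply/measurable_EFinP; exact: measurable_exponential_pdf.
by rewrite integral_exponential_pdf // mule1 ltry.
Qed.

Lemma integral_gamma_integrand_lty (s : R) : 0 < s ->
  (\int[mu]_(x in pos) (gamma_integrand s x)%:E < +oo)%E.
Proof.
move=> s0.
have -> : pos = `]0%R, 1%R]%classic `|` `]1%R, +oo[%classic.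
  apply/seteqP; split => x /=.
    by move=> x0; case: (leP x 1) => x1; [left|right]; rewrite /= in_itv /= ?x0 ?x1.
  by case; rewrite /= in_itv /= ?andbT; [case/andP|exact: lt_trans].
rewrite ge0_integral_setU //; last 3 first.
- by apply/measurable_EFinP; apply: measurable_funTS; exact: measurable_gamma_integrand.
- by move=> x _; rewrite lee_fin gamma_integrand_ge0.
- apply/disj_setPS => x [] /=; rewrite !in_itv /= andbT => /andP[_ x1].
  by move/(le_lt_trans x1); rewrite ltxx.
apply: lte_add_pinfty; last exact: integral_gamma_integrand_itvoy_lty.
apply: le_lt_trans (ltry (s^-1)).
apply: le_trans (integral_powR_itvoc01_le s0).
apply: ge0_le_integral => //.
- by move=> x _; rewrite lee_fin gamma_integrand_ge0.
- by apply/measurable_EFinP; apply: measurable_funTS; exact: measurable_gamma_integrand.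
- by apply/measurable_EFinP; apply: measurable_funTS; exact: measurable_powR.
- move=> x; rewrite /= in_itv /= => /andP[x0 _]; rewrite lee_fin /gamma_integrand.
  by rewrite ler_piMr ?powR_ge0 // expR_le1 oppr_le0 ltW.
Qed.

Lemma integral_gamma_integrandE (s : R) : 0 < s ->
  (\int[mu]_(x in pos) (gamma_integrand s x)%:E)%E = (Gammaf s)%:E.
Proof.
move=> s0; rewrite /Gammaf /int_pos fineK // ge0_fin_numE ?integral_gamma_integrand_lty //.
by apply: integral_ge0 => x _; rewrite lee_fin gamma_integrand_ge0.
Qed.

Lemma preimage_mulr_itvoc (c a b : R) : 0 < c ->
  ( *%R c) @^-1` `]a, b]%classic = `]a / c, b / c]%classic.
Proof.
move=> c0; apply/seteqP; split => x /=; rewrite !in_itv /=.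
  by move=> /andP[ax xb]; rewrite ltr_pdivrMr // ler_pdivlMr // [x * c]mulrC ax xb.
by move=> /andP[]; rewrite ltr_pdivrMr // ler_pdivlMr // ![_ * c]mulrC => -> ->.
Qed.

Lemma lebesgue_measure_mulr (c : R) (A : set R) : 0 < c -> measurable A ->
  mu A = (c%:E * pushforward mu ( *%R c : R -> measurableTypeR R) A)%E.
Proof.
move=> c0 mA.
set nu := pushforward mu ( *%R c : R -> measurableTypeR R).
have -> : (c%:E * nu A)%E = mscale (NngNum (ltW c0)) nu A by [].
apply: lebesgue_measure_unique => //= _ [[a b]] _ <-.
rewrite /mscale/= /pushforward preimage_mulr_itvoc // !lebesgue_measure_itv/=.
rewrite !lte_fin ltr_pM2r ?invr_gt0 //.
case: ifPn => ab; last by rewrite mule0.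
by rewrite -EFinB -EFinM; congr EFin; rewrite -mulrBl mulrCA divff ?mulr1 // gt_eqF.
Qed.

Lemma ge0_integral_pos_mulr (c : R) (f : R -> R) : 0 < c ->
  measurable_fun setT f -> (forall x, 0 < x -> 0 <= f x) ->
  (\int[mu]_(x in pos) (f (c * x))%:E = (c^-1)%:E * \int[mu]_(x in pos) (f x)%:E)%E.
Proof.
move=> c0 mf f0.
have preP : ( *%R c) @^-1` pos = pos.
  by apply/seteqP; split => x /=; rewrite pmulr_rgt0.
have mfpos : measurable_fun pos (EFin \o f).
  by apply/measurable_EFinP; exact: measurable_funTS.
rewrite [in RHS](eq_measure_integral
    (mscale (NngNum (ltW c0)) (pushforward mu ( *%R c : R -> measurableTypeR R)))); last first.
  by move=> A mA _; rewrite /mscale /= (lebesgue_measure_mulr c0).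
rewrite [in RHS]ge0_integral_mscale //=; last exact: measurable_pos.
rewrite [in RHS]ge0_integral_pushforward //=; last 2 first.
- exact: measurable_pos.
- by move=> x; rewrite inE => x0; rewrite lee_fin; exact: f0.
by rewrite preP muleA -EFinM mulVf ?gt_eqF // mul1e.
Qed.

Lemma integral_powR_expR_mulr (s c : R) : 0 < s -> 0 < c ->
  (\int[mu]_(x in pos) (powR x (s - 1) * expR (- (c * x)))%:E)%E =
  (powR c (- s) * Gammaf s)%:E.
Proof.
move=> s0 c0.
have p0 : 0 < powR c (s - 1) by rewrite powR_gt0.
transitivity (\int[mu]_(x in pos) ((powR c (s - 1))^-1%:E * (gamma_integrand s (c * x))%:E))%E.
  apply: eq_integral => x; rewrite inE /= => x0.
  rewrite -EFinM; congr EFin; rewrite /gamma_integrand powRM ?(ltW c0) ?(ltW x0) //.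
  by field; exact: lt0r_neq0.
rewrite ge0_integralZl_EFin //; last 4 first.
- exact: measurable_pos.
- by move=> x _; rewrite lee_fin gamma_integrand_ge0.
- apply/measurable_EFinP; apply: measurable_funTS.
  by apply: measurableT_comp; [exact: measurable_gamma_integrand|].
- by rewrite invr_ge0 ltW.
rewrite ge0_integral_pos_mulr //; last 2 first.
- exact: measurable_gamma_integrand.
- by move=> x _; exact: gamma_integrand_ge0.
rewrite integral_gamma_integrandE // muleA -!EFinM; congr EFin; congr (_ * _).
rewrite mulrC -powR_inv1 ?(ltW c0) // -powRB ?(gt_eqF c0) ?implybT //.
by congr powR; ring.
Qed.

End gamma_integral.

Section besselK_bounds.
Local Open Scope classical_set_scope.
Variable R : realType.
Local Notation mu := (@lebesgue_measure R).
Local Notation pos := [set y : R | 0 < y].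

Definition besselK_integrand (nu tau y : R) : R :=
  powR y (nu - 1) * expR (- (tau * (y + y^-1)) / 2).

Lemma measurable_besselK_integrand (nu tau : R) :
  measurable_fun pos (besselK_integrand nu tau).
Proof.
apply: (eq_measurable_fun
  (fun y => powR y (nu - 1) * expR (- (tau * (y + powR y (-1))) / 2))).
  by move=> y; rewrite inE /= => y0; rewrite /besselK_integrand powR_inv1 // ltW.
apply: measurable_funTS; apply: measurable_funM; first exact: measurable_powR.
apply: measurableT_comp; first exact: measurable_expR.
apply: measurable_funM => //; apply: measurableT_comp => //.
apply: measurable_funM => //; apply: measurable_funD => //; exact: measurable_powR.
Qed.

Lemma besselK_integrand_ge0 (nu tau y : R) : 0 <= besselK_integrand nu tau y.
Proof. by rewrite mulr_ge0 ?powR_ge0 ?expR_ge0. Qed.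

Lemma besselK_ge0 (nu tau : R) : 0 <= besselK nu tau.
Proof.
rewrite mulr_ge0 ?invr_ge0 ?ler0n // fine_ge0 //.
by apply: integral_ge0 => y _; rewrite lee_fin besselK_integrand_ge0.
Qed.

Lemma besselK_le_Gammaf (nu tau c e : R) : 0 < nu -> 0 < c -> 0 <= e ->
  (forall y, 0 < y -> besselK_integrand nu tau y <= e * (powR y (nu - 1) * expR (- (c * y)))) ->
  besselK nu tau <= 2^-1 * (e * (powR c (- nu) * Gammaf nu)).
Proof.
move=> nu0 c0 e0 hb; rewrite /besselK /int_pos.
apply: ler_wpM2l; first by rewrite invr_ge0 ler0n.
set J := (\int[mu]_(y in _) _)%E.
have J0 : (0 <= J)%E.
  by apply: integral_ge0 => y _; rewrite lee_fin besselK_integrand_ge0.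
have mg : measurable_fun pos (fun y => (powR y (nu - 1) * expR (- (c * y))))%R.
  apply: measurable_funTS; apply: measurable_funM; first exact: measurable_powR.
  by apply: measurableT_comp; [exact: measurable_expR|apply: measurableT_comp].
have Jle : (J <= (e * (powR c (- nu) * Gammaf nu))%:E)%E.
  rewrite EFinM -integral_powR_expR_mulr // -ge0_integralZl_EFin //; last 3 first.
  - exact: measurable_pos.
  - by move=> y y0; rewrite lee_fin mulr_ge0 ?powR_ge0 ?expR_ge0.
  - exact/measurable_EFinP.
  apply: ge0_le_integral.
  - exact: measurable_pos.
  - by move=> y _; rewrite lee_fin besselK_integrand_ge0.
  - by apply/measurable_EFinP; exact: measurable_besselK_integrand.
  - by apply/measurable_EFinP; apply: measurable_funM.
  - by move=> y y0; rewrite -EFinM lee_fin; exact: hb.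
have Jfin : J \is a fin_num by rewrite ge0_fin_numE // (le_lt_trans Jle) ?ltry.
by move: Jle; rewrite -(fineK Jfin) lee_fin.
Qed.

Lemma besselK_le_powR (nu tau : R) : 0 < nu -> 0 < tau ->
  besselK nu tau <= 2^-1 * (powR (tau / 2) (- nu) * Gammaf nu).
Proof.
move=> nu0 tau0; rewrite -[X in 2^-1 * X]mul1r.
apply: besselK_le_Gammaf; rewrite ?divr_gt0 // => y y0.
rewrite mul1r; apply: ler_wpM2l; first exact: powR_ge0.
rewrite ler_expR mulrDr.
have : 0 <= tau * y^-1 by rewrite mulr_ge0 ?invr_ge0 ?ltW.
by move: (tau * y^-1) => u; nra.
Qed.

(* For [tau >= 1]: [tau (y + 1/y) / 2 >= (tau - 1) + y / 2], since [y + 1/y >= 2]. *)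
Lemma besselK_le_expR (nu tau : R) : 0 < nu -> 1 <= tau ->
  besselK nu tau <= 2^-1 * (expR (1 - tau) * (powR 2 nu * Gammaf nu)).
Proof.
move=> nu0 tau1.
rewrite -powRVN ?ler0n //.
apply: besselK_le_Gammaf => // y y0.
rewrite /besselK_integrand mulrCA; apply: ler_wpM2l; first exact: powR_ge0.
rewrite -expRD ler_expR.
have yV0 : 0 < y^-1 by rewrite invr_gt0.
have AMGM : 0 <= y + y^-1 - 2.
  have -> : y + y^-1 - 2 = (y - 1) ^+ 2 / y by field; exact: lt0r_neq0.
  by rewrite divr_ge0 ?sqr_ge0 // ltW.
have : 0 <= (tau - 1) * (y + y^-1 - 2) by rewrite mulr_ge0 // subr_ge0.
by move: AMGM (ltW yV0); move: (y^-1) => u; nra.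
Qed.

End besselK_bounds.

Section rho_inner_product.
Variables (R : realType) (d : nat) (rho : 'M[R]_d).
Hypothesis rho_posdef : sym_posdef rho.

Lemma sym_posdef_unitmx : rho \in unitmx.
Proof.
case: rho_posdef => _ pd.
rewrite unitmxE unitfE; apply/negP => /det0P [v v0 vr].
have : v^T != 0 by apply: contra v0 => /eqP h; rewrite -[v]trmxK h trmx0.
by move=> /pd; rewrite trmxK vr mul0mx mxE ltxx.
Qed.

Lemma ip_rhoC (x y : 'cV[R]_d) : ip_rho rho x y = ip_rho rho y x.
Proof.
have invmx_sym : (invmx rho)^T = invmx rho.
  by case: rho_posdef => rho_sym _; rewrite trmx_inv rho_sym.
rewrite /ip_rho.
have -> : y^T *m invmx rho *m x = (x^T *m invmx rho *m y)^T.
  by rewrite !trmx_mul trmxK invmx_sym mulmxA.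
by rewrite [RHS]mxE.
Qed.

Lemma ip_rhoBl (x y z : 'cV[R]_d) :
  ip_rho rho (x - y) z = ip_rho rho x z - ip_rho rho y z.
Proof. by rewrite /ip_rho (raddfB (@trmx R d 1)) !mulmxBl !mxE. Qed.

Lemma ip_rhoZl (t : R) (x z : 'cV[R]_d) : ip_rho rho (t *: x) z = t * ip_rho rho x z.
Proof. by rewrite /ip_rho linearZ /= -!scalemxAl mxE. Qed.

Lemma ip_rhoBr (x y z : 'cV[R]_d) :
  ip_rho rho z (x - y) = ip_rho rho z x - ip_rho rho z y.
Proof. by rewrite ip_rhoC ip_rhoBl ![ip_rho _ x _]ip_rhoC ![ip_rho _ y _]ip_rhoC. Qed.

Lemma ip_rhoZr (t : R) (x z : 'cV[R]_d) : ip_rho rho z (t *: x) = t * ip_rho rho z x.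
Proof. by rewrite ip_rhoC ip_rhoZl ip_rhoC. Qed.

Lemma ip_rho_gt0 (x : 'cV[R]_d) : x != 0 -> 0 < ip_rho rho x x.
Proof.
move=> x0; case: rho_posdef => rho_sym pd.
set y := invmx rho *m x.
have xy : x = rho *m y by rewrite /y mulKVmx // sym_posdef_unitmx.
have y0 : y != 0 by apply: contra x0 => /eqP h; rewrite xy h mulmx0.
rewrite /ip_rho xy trmx_mul rho_sym -!mulmxA (mulmxA (invmx rho)).
by rewrite mulVmx ?sym_posdef_unitmx // mul1mx mulmxA; exact: pd.
Qed.

Lemma ip_rho_ge0 (x : 'cV[R]_d) : 0 <= ip_rho rho x x.
Proof.
have [->|x0] := eqVneq x 0; last exact/ltW/ip_rho_gt0.
by rewrite /ip_rho mulmx0 mxE.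
Qed.

Lemma norm_rho_gt0 (z : 'cV[R]_d) : z != 0 -> 0 < norm_rho rho z.
Proof. by move=> z0; rewrite sqrtr_gt0 ip_rho_gt0. Qed.

(* Expand [0 <= <e - t z, e - t z>] at [t = <e, z> / <z, z>]. *)
Lemma ip_rho_le_norm (e z : 'cV[R]_d) :
  ip_rho rho e z <= norm_rho rho e * norm_rho rho z.
Proof.
have [->|z0] := eqVneq z 0.
  by rewrite /norm_rho /ip_rho !mulmx0 mxE sqrtr0 mulr0.
set a := ip_rho rho e z; set qz := ip_rho rho z z; set qe := ip_rho rho e e.
have qz0 : 0 < qz by exact: ip_rho_gt0.
set t := a / qz.
have := ip_rho_ge0 (e - t *: z).
rewrite ip_rhoBl !ip_rhoBr !ip_rhoZl !ip_rhoZr (ip_rhoC z e) -/a -/qz -/qe.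
have -> : qe - t * a - (t * a - t * (t * qz)) = (qe * qz - a ^+ 2) / qz.
  by rewrite /t; field; exact: lt0r_neq0.
rewrite pmulr_lge0 ?invr_gt0 // subr_ge0 => a2_le.
apply: le_trans (ler_norm a) _.
by rewrite -sqrtrM ?ip_rho_ge0 // -sqrtr_sqr ler_sqrt // mulr_ge0 ?ip_rho_ge0.
Qed.

End rho_inner_product.

Lemma c1_NTS_gt0 (R : realType) (d : nat) (rho : 'M[R]_d) (eta : 'cV[R]_d) (lambda : R) :
  0 < lambda -> 0 < c1_NTS rho eta lambda.
Proof. by move=> lambda_gt0; rewrite sqrtr_gt0 ltr_wpDl ?sqr_ge0 // mulr_gt0. Qed.

Section NTS_bounds.
Variables (R : realType) (d : nat) (alpha delta lambda : R).
Variables (eta : 'cV[R]_d) (rho : 'M[R]_d).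
Hypotheses (alpha_ge0 : 0 <= alpha) (delta_gt0 : 0 < delta) (lambda_gt0 : 0 < lambda).
Hypothesis rho_posdef : sym_posdef rho.

Local Notation ell := (ell_NTS alpha delta lambda eta rho).
Local Notation nz := (norm_rho rho).
Let nu := alpha + d%:R / 2.
Let c1 := c1_NTS rho eta lambda.
Let prefactor :=
  2 * delta * Num.sqrt (powR c1 (2 * alpha + d%:R) / ((2 * pi) ^+ d * \det rho)).

Let c1_gt0 : 0 < c1 := c1_NTS_gt0 rho eta lambda_gt0.

Let nu_gt0 (z : 'cV[R]_d) : z != 0 -> 0 < nu.
Proof.
by move=> /cV_neq0_dim_gt0 d0; rewrite ltr_wpDl // divr_gt0 // ltr0n.
Qed.

Let prefactor_ge0 : 0 <= prefactor.
Proof. by rewrite !mulr_ge0 ?sqrtr_ge0 ?ltW. Qed.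

Let ellE (z : 'cV[R]_d) :
  ell z = prefactor * (besselK nu (c1 * nz z) / powR (nz z) nu) * expR (ip_rho rho eta z).
Proof. by []. Qed.

Lemma ell_NTS_ge0 (z : 'cV[R]_d) : 0 <= ell z.
Proof.
by rewrite ellE mulr_ge0 ?expR_ge0 // mulr_ge0 // divr_ge0 ?powR_ge0 ?besselK_ge0.
Qed.

Lemma NTS_prefactorE :
  prefactor / 2 * powR (c1 / 2) (- nu) =
    powR 2 alpha * delta / Num.sqrt (pi ^+ d * \det rho).
Proof.
have sqrt2d : Num.sqrt (2 ^+ d) = powR 2 (d%:R / 2 : R).
  by rewrite -powR12_sqrt ?exprn_ge0 ?ler0n // -powR_mulrn ?ler0n // -powRrM.
rewrite /prefactor.
have -> : 2 * alpha + d%:R = nu * 2 by rewrite /nu; field.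
rewrite powRrM powR_mulrn ?powR_ge0 // sqrtrM ?sqr_ge0 //.
rewrite sqrtr_sqr ger0_norm ?powR_ge0 // exprMn -(mulrA (2 ^+ d)) sqrtrV_any.
rewrite sqrtrM ?exprn_ge0 ?ler0n // sqrt2d invfM.
rewrite powRM ?invr_ge0 ?ler0n ?ltW // powRVN ?ler0n // powRN.
rewrite [powR 2 nu]powRD ?pnatr_eq0 ?implybT //.
have : powR c1 nu != 0 by rewrite gt_eqF ?powR_gt0.
have : powR 2 (d%:R / 2 : R) != 0 by rewrite gt_eqF ?powR_gt0.
(* abstract the inverse square root, not the root itself, which may vanish *)
move: (powR c1 nu) (powR 2 (d%:R / 2 : R)) (Num.sqrt (pi ^+ d * \det rho))^-1.
by move=> p q s q0 p0; field; rewrite p0 q0.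
Qed.

Lemma ell_NTS_le_near0 (h : R) (z : 'cV[R]_d) : 0 < h -> z != 0 -> nz z <= h ->
  ell z <= C_NTS alpha delta eta rho h * powR (nz z) (- (A_NTS alpha + d%:R)).
Proof.
move=> h0 z0 zh; set r := nz z; set ne := nz eta.
have r0 : 0 < r by exact: norm_rho_gt0.
have nu0 := nu_gt0 z0.
have ip_le : expR (ip_rho rho eta z) <= expR (h * ne).
  rewrite ler_expR (le_trans (ip_rho_le_norm rho_posdef _ _)) // mulrC.
  by rewrite ler_wpM2r ?sqrtr_ge0.
have rA : powR r (- (A_NTS alpha + d%:R)) = (powR r nu)^-1 * (powR r nu)^-1.
  rewrite -!powRN -powRD ?(gt_eqF r0) ?implybT //.
  by congr powR; rewrite /A_NTS /nu; field.
have rc : powR (c1 * r / 2) (- nu) = powR (c1 / 2) (- nu) * (powR r nu)^-1.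
  by rewrite mulrAC !powRM ?invr_ge0 ?divr_ge0 ?ltW // -powRN.
have -> : C_NTS alpha delta eta rho h * powR r (- (A_NTS alpha + d%:R)) =
    prefactor * (2^-1 * (powR (c1 * r / 2) (- nu) * Gammaf nu) / powR r nu) * expR (h * ne).
  rewrite /C_NTS -/nu -/ne rA rc.
  transitivity (powR 2 alpha * delta / Num.sqrt (pi ^+ d * \det rho) * Gammaf nu
                * ((powR r nu)^-1 / powR r nu) * expR (h * ne)); first by ring.
  by rewrite -NTS_prefactorE; ring.
rewrite ellE; apply: ler_pM; rewrite ?expR_ge0 //.
- by rewrite mulr_ge0 // divr_ge0 ?powR_ge0 ?besselK_ge0.
- rewrite ler_wpM2l // ler_wpM2r ?invr_ge0 ?powR_ge0 //.
  by rewrite besselK_le_powR ?mulr_gt0.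
Qed.

Lemma ell_NTS_le_tail (z : 'cV[R]_d) : z != 0 -> 1 <= nz z -> 1 <= c1 * nz z ->
  ell z <= prefactor / 2 * expR 1 * powR 2 nu * Gammaf nu
           * expR (- (B_NTS rho eta lambda * nz z)).
Proof.
move=> z0 r1 c1r1; set r := nz z; set ne := nz eta.
have r_nu : 1 <= powR r nu.
  by rewrite -(powRr0 r); apply: ler_powR => //; exact/ltW/(nu_gt0 z0).
have ip_le : expR (ip_rho rho eta z) <= expR (ne * r).
  by rewrite ler_expR ip_rho_le_norm.
have -> : B_NTS rho eta lambda = c1 - ne by [].
have eE : expR 1 * expR (- ((c1 - ne) * r)) = expR (1 - c1 * r) * expR (ne * r).
  by rewrite -!expRD; congr expR; ring.
have -> : prefactor / 2 * expR 1 * powR 2 nu * Gammaf nu * expR (- ((c1 - ne) * r)) =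
    prefactor * (2^-1 * (expR (1 - c1 * r) * (powR 2 nu * Gammaf nu))) * expR (ne * r).
  transitivity (prefactor / 2 * powR 2 nu * Gammaf nu * (expR 1 * expR (- ((c1 - ne) * r))));
    first by ring.
  by rewrite eE; ring.
rewrite ellE; apply: ler_pM; rewrite ?expR_ge0 //.
  by rewrite mulr_ge0 // divr_ge0 ?powR_ge0 ?besselK_ge0.
rewrite ler_wpM2l //; apply: le_trans (besselK_le_expR (nu_gt0 z0) c1r1).
by rewrite ler_pdivrMr ?(lt_le_trans ltr01) // ler_peMr ?besselK_ge0.
Qed.

End NTS_bounds.

Theorem mainTheorem1 (R : realType) (d : nat) (alpha delta lambda : R)
  (eta : 'cV[R]_d) (rho : 'M[R]_d) :
  0 <= alpha -> alpha < 1 -> 0 < delta -> 0 < lambda ->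
  sym_posdef rho ->
  (forall h : R, 0 < h -> forall z : 'cV[R]_d, z != 0 ->
     norm_rho rho z <= h ->
     ell_NTS alpha delta lambda eta rho z
       <= C_NTS alpha delta eta rho h
          * powR (norm_rho rho z) (- (A_NTS alpha + d%:R)))
  /\
  (exists M C : R, forall z : 'cV[R]_d, z != 0 ->
     M <= norm_rho rho z ->
     `|ell_NTS alpha delta lambda eta rho z|
       <= C * expR (- (B_NTS rho eta lambda * norm_rho rho z))).
Proof.
move=> alpha_ge0 _ delta_gt0 lambda_gt0 rho_posdef.
split=> [h h0 z z0 zh|]; first exact: ell_NTS_le_near0.
have c1_gt0 := c1_NTS_gt0 rho eta lambda_gt0; set c1 := c1_NTS rho eta lambda in c1_gt0 *.
exists (1 + c1^-1); eexists => z z0 Mz.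
rewrite ger0_norm ?ell_NTS_ge0 //; apply: ell_NTS_le_tail => //.
  by apply: le_trans Mz; rewrite lerDl invr_ge0 ltW.
rewrite -(mulfV (lt0r_neq0 c1_gt0)) ler_pM2l //.
by apply: le_trans Mz; rewrite lerDr.
Qed.
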